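(* Let $\pi$ be uniform on $\mathrm{PF}_n$ and $Z(\pi)=\#\{i:\pi_i=1\}$. Then for each fixed integer $j\ge0$, $P(Z(\pi)=1+j)\to\frac{1}{e\,j!}$ as $n\to\infty$.
   Context: A parking function of length $n$ is a sequence $(\pi_1,\dots,\pi_n)$ with $1\le\pi_i\le n$ such that $\#\{t:\pi_t\le i\}\ge i$ for all $1\le i\le n$; $\mathrm{PF}_n$ denotes the set of these. *)

From Stdlib Require Import Reals Arith List.
Import ListNotations.
From Stdlib Require Import Bool.
Local Open Scope bool_scope.
Open Scope R_scope.

Fixpoint all_seqs (n k : nat) : list (list nat) :=
  match k with
  | O => [ [] ]
  | S k' => flat_map (fun x => map (cons x) (all_seqs n k')) (seq 1 n)
  end.

Definition count_le (p : list nat) (i : nat) : nat :=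
  length (filter (fun x => Nat.leb x i) p).

Definition is_pf (n : nat) (p : list nat) : bool :=
  Nat.eqb (length p) n
  && forallb (fun x => Nat.leb 1 x && Nat.leb x n) p
  && forallb (fun i => Nat.leb i (count_le p i)) (seq 1 n).

(* PF_n, as an explicit duplicate-free enumeration. *)
Definition PF (n : nat) : list (list nat) := filter (is_pf n) (all_seqs n n).

Definition Z (p : list nat) : nat := length (filter (fun x => Nat.eqb x 1) p).

Definition probZ (n m : nat) : R :=
  INR (length (filter (fun p => Nat.eqb (Z p) m) (PF n))) / INR (length (PF n)).

(* Deleting the ones of a parking function with k ones and lowering its other
   entries by one leaves a sequence of length n - k over [1, n - 1] that parks
   when k - 1 spots at the start of the street are already free; each such
   sequence arises from exactly C(n, k) parking functions. Sequences of length m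
   that park with a - 1 free spots number a (a + m)^(m - 1): deleting the ones
   once more gives a recursion that is solved by Abel's binomial identity.
   Hence P(Z = k) = C(n, k) k n^(n - k - 1) / (n + 1)^(n - 1)
   = (1 / (k - 1)!) (n (n - 1) ... (n - k + 1) / n^k) (n / (n + 1))^(n - 1),
   and the last two factors tend to 1 and 1 / e. *)

From Coquelicot Require Import Coquelicot.
From Stdlib Require Import Reals Arith List Lia Lra.
Import ListNotations.
Local Open Scope bool_scope.
Open Scope R_scope.

Lemma forallb_ext_in {A} (f g : A -> bool) l :
  (forall x, In x l -> f x = g x) -> forallb f l = forallb g l.
Proof. induction l as [|x l IH]; simpl; intros H; auto. rewrite H, IH; auto. Qed.

Lemma forallb_map {A B} (f : B -> bool) (h : A -> B) l :
  forallb f (map h l) = forallb (fun x => f (h x)) l.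
Proof. induction l as [|x l IH]; simpl; auto. now rewrite IH. Qed.

Lemma filter_filter {A} (f g : A -> bool) l :
  filter f (filter g l) = filter (fun x => g x && f x) l.
Proof. induction l as [|x l IH]; simpl; auto. destruct (g x); simpl; now rewrite IH. Qed.

Lemma list_sum_map_zero {A} (f : A -> nat) l :
  (forall x, In x l -> f x = 0%nat) -> list_sum (map f l) = 0%nat.
Proof. induction l as [|x l IH]; simpl; intros H; auto. rewrite H, IH; auto. Qed.

Lemma list_sum_map_mul_l {A} c (f : A -> nat) l :
  list_sum (map (fun x => c * f x)%nat l) = (c * list_sum (map f l))%nat.
Proof. induction l as [|x l IH]; simpl; [lia|]. rewrite IH; lia. Qed.

Fixpoint binom (n k : nat) : nat :=
  match n, k with
  | _, O => 1
  | O, S _ => 0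
  | S n', S k' => binom n' k' + binom n' k
  end%nat.

Lemma binom_0_r n : binom n 0 = 1%nat.
Proof. now destruct n. Qed.

Lemma binom_gt n k : (n < k)%nat -> binom n k = 0%nat.
Proof.
  revert k; induction n as [|n IH]; intros [|k] Hnk; simpl; try lia.
  rewrite !IH; lia.
Qed.

Lemma binom_diag n : binom n n = 1%nat.
Proof. induction n as [|n IH]; simpl; auto. rewrite IH, binom_gt; lia. Qed.

Lemma binom_sym n s t : (s + t = n)%nat -> binom n s = binom n t.
Proof.
  revert s t; induction n as [|n IH]; intros [|s] [|t] Hst; try lia.
  - replace t with n by lia. now rewrite binom_0_r, (binom_diag (S n)).
  - replace s with n by lia. now rewrite binom_0_r, (binom_diag (S n)).
  - simpl. rewrite (IH s (S t)), (IH (S s) t) by lia. lia.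
Qed.

Lemma sum_binom_succ m (f : nat -> R) N :
  sum_f_R0 (fun s => INR (binom (S m) s) * f s) (S N)
  = sum_f_R0 (fun s => INR (binom m s) * f s) (S N)
    + sum_f_R0 (fun s => INR (binom m s) * f (S s)) N.
Proof.
  induction N as [|N IH].
  - simpl. rewrite plus_INR, !binom_0_r. simpl INR. ring.
  - rewrite (tech5 _ (S N)), IH, (tech5 _ (S N)).
    rewrite (tech5 (fun s => INR (binom m s) * f (S s)) N).
    cbn [binom]. rewrite plus_INR. ring.
Qed.

Lemma sum_binom_pow m x :
  sum_f_R0 (fun s => INR (binom m s) * x ^ s) m = (x + 1) ^ m.
Proof.
  induction m as [|m IH].
  - simpl. ring.
  - rewrite sum_binom_succ, tech5, IH, binom_gt by lia.
    rewrite (sum_eq _ (fun s => INR (binom m s) * x ^ s * x)) by (intros; simpl; ring).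
    rewrite <- scal_sum, IH. simpl. ring.
Qed.

Lemma sum_f_R0_indicator v m :
  (v <= m)%nat -> sum_f_R0 (fun s => if v =? s then 1 else 0) m = 1.
Proof.
  induction m as [|m IH]; intros Hv.
  - replace v with 0%nat by lia. reflexivity.
  - rewrite tech5. destruct (Nat.eqb_spec v (S m)) as [->|Hne].
    + rewrite sum_eq_R0; [ring|]. intros s Hs. destruct (Nat.eqb_spec (S m) s); [lia | reflexivity].
    + rewrite IH by lia. ring.
Qed.

Lemma count_partition (f : list nat -> nat) (P : list nat -> bool) l m :
  (forall p, In p l -> (f p <= m)%nat) ->
  INR (length (filter P l))
  = sum_f_R0 (fun s => INR (length (filter (fun p => (f p =? s) && P p) l))) m.
Proof.
  induction l as [|a l IH]; intros Hf.
  - symmetry. apply sum_eq_R0. intros; reflexivity.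
  - rewrite (sum_eq _ (fun s => (if P a then if f a =? s then 1 else 0 else 0)
                         + INR (length (filter (fun p => (f p =? s) && P p) l)))).
    2:{ intros s _. cbn [filter]. destruct (f a =? s), (P a); cbn [andb length]; rewrite ?S_INR; ring. }
    rewrite plus_sum, <- IH by (intros; apply Hf; now right).
    simpl. destruct (P a).
    + rewrite sum_f_R0_indicator by (apply Hf; now left). cbn [length]. rewrite S_INR. ring.
    + rewrite sum_eq_R0 by (intros; reflexivity). ring.
Qed.

Definition abel_term (x : R) (s : nat) : R :=
  match s with O => 1 | S k => (x - INR (S k)) * x ^ k end.

Lemma abel_term_succ x s : abel_term x (S s) = abel_term x s * x - x ^ s.
Proof. destruct s; simpl abel_term; rewrite ?S_INR; simpl; ring. Qed.

Lemma sum_binom_abel_term m x :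
  sum_f_R0 (fun s => INR (binom (S m) s) * abel_term x s) (S m)
  = (x - INR m) * (x + 1) ^ m.
Proof.
  assert (Hrec : forall m, sum_f_R0 (fun s => INR (binom (S m) s) * abel_term x s) (S m)
     = (x + 1) * sum_f_R0 (fun s => INR (binom m s) * abel_term x s) m - (x + 1) ^ m).
  { intros k. rewrite sum_binom_succ, tech5, binom_gt by lia.
    rewrite (sum_eq (fun s => INR (binom k s) * abel_term x (S s))
                    (fun s => INR (binom k s) * abel_term x s * x - INR (binom k s) * x ^ s))
      by (intros s _; rewrite abel_term_succ; ring).
    rewrite minus_sum, <- scal_sum, sum_binom_pow. rewrite INR_0. ring. }
  induction m as [|m IH].
  - simpl. ring.
  - rewrite Hrec, IH, S_INR. simpl. ring.
Qed.

Definition abel_count (x : R) (m : nat) : R :=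
  match m with O => 1 | S k => x * (x + INR (S k)) ^ k end.

Lemma in_all_seqs n k p :
  In p (all_seqs n k) -> length p = k /\ Forall (fun x => 1 <= x <= n)%nat p.
Proof.
  revert p; induction k as [|k IH]; simpl; intros p Hp.
  - destruct Hp as [<- | []]. auto.
  - apply in_flat_map in Hp as [x [Hx Hp]]. apply in_map_iff in Hp as [q [<- Hq]].
    apply in_seq in Hx. destruct (IH q Hq) as [Hlen Hall].
    split; simpl; [congruence | constructor; [lia | exact Hall]].
Qed.

Lemma count_all_seqs_succ (P : list nat -> bool) n k :
  length (filter P (all_seqs n (S k)))
  = list_sum (map (fun x => length (filter (fun p => P (x :: p)) (all_seqs n k))) (seq 1 n)).
Proof.
  simpl. generalize (seq 1 n). intros xs.
  induction xs as [|x xs IH]; simpl; auto.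
  rewrite filter_app, length_app, IH. f_equal. clear IH.
  induction (all_seqs n k) as [|p ps IHps]; simpl; auto.
  destruct (P (x :: p)); simpl; auto.
Qed.

Definition strip_ones (p : list nat) : list nat :=
  map pred (filter (fun x => negb (x =? 1)) p).

Lemma strip_ones_cons x p : (2 <= x)%nat -> strip_ones (x :: p) = pred x :: strip_ones p.
Proof. intros Hx. unfold strip_ones; simpl. destruct (Nat.eqb_spec x 1); [lia | reflexivity]. Qed.

Lemma Z_add_length_strip_ones p : (Z p + length (strip_ones p))%nat = length p.
Proof.
  induction p as [|x p IH]; auto. unfold Z, strip_ones in *; simpl.
  destruct (Nat.eqb_spec x 1); simpl; lia.
Qed.

Lemma count_le_strip_ones p i :
  (1 <= i)%nat -> count_le p i = (Z p + count_le (strip_ones p) (i - 1))%nat.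
Proof.
  intros Hi. induction p as [|x p IH]; auto. unfold Z, strip_ones, count_le in *; simpl.
  destruct (Nat.eqb_spec x 1) as [->|Hx].
  - destruct i; [lia|]. simpl. now rewrite IH.
  - simpl. destruct (Nat.leb_spec x i), (Nat.leb_spec (pred x) (i - 1)); simpl; lia.
Qed.

Lemma count_le_strip_ones_0 p :
  Forall (fun x => 1 <= x)%nat p -> count_le (strip_ones p) 0 = 0%nat.
Proof.
  induction 1 as [|x p Hx _ IH]; auto. unfold count_le, strip_ones in *; simpl.
  destruct (Nat.eqb_spec x 1); simpl; auto.
  destruct (Nat.leb_spec (pred x) 0); simpl; auto. lia.
Qed.

(* A sequence over [1, N+1] is determined by the places of its entries different
   from 1 and by its stripped sequence over [1, N]. *)
Lemma count_strip_ones N m s (Q : list nat -> bool) :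
  length (filter (fun p => (length (strip_ones p) =? s) && Q (strip_ones p))
                 (all_seqs (S N) m))
  = (binom m s * length (filter Q (all_seqs N s)))%nat.
Proof.
  revert s Q; induction m as [|m IH]; intros s Q.
  - destruct s; simpl; [change (strip_ones []) with (@nil nat); destruct (Q []) |];
      reflexivity.
  - rewrite count_all_seqs_succ. cbn [seq map list_sum fold_right].
    rewrite <- seq_shift, map_map, IH.
    destruct s as [|s].
    + rewrite list_sum_map_zero, !binom_0_r; [lia|].
      intros x Hx. apply in_seq in Hx.
      rewrite (filter_ext_in _ (fun _ => false)), filter_false; [reflexivity|].
      intros p _. now rewrite strip_ones_cons by lia.
    + erewrite map_ext_in.
      2:{ intros x Hx. apply in_seq in Hx.
          rewrite (filter_ext_in _ (fun p => (length (strip_ones p) =? s)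
                                               && Q (x :: strip_ones p))).
          2:{ intros p _. now rewrite strip_ones_cons by lia. }
          rewrite (IH s (fun q => Q (x :: q))). reflexivity. }
      rewrite list_sum_map_mul_l, (count_all_seqs_succ Q). simpl binom. lia.
Qed.

(* With a = 1 this is the parking condition of [is_pf]; in general a - 1 spots
   at the start of the street are already free. The sequences of length m over
   [1, a + m - 1] satisfying it are counted by [abel_count a m] = a (a + m)^(m-1). *)
Definition pf_cond (a M : nat) (q : list nat) : bool :=
  forallb (fun i => i <? count_le q i + a) (seq 1 M).

Lemma pf_cond_succ a M p :
  Forall (fun x => 1 <= x)%nat p ->
  pf_cond a (S M) p = (1 <? a + Z p) && pf_cond (a + Z p - 1) M (strip_ones p).
Proof.
  intros Hp. unfold pf_cond. cbn [seq forallb].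
  rewrite <- seq_shift, forallb_map, (count_le_strip_ones p 1), count_le_strip_ones_0 by auto.
  replace (1 <? Z p + 0 + a) with (1 <? a + Z p) by (f_equal; lia).
  destruct (Nat.ltb_spec 1 (a + Z p)); [simpl | reflexivity].
  apply forallb_ext_in. intros i Hi. apply in_seq in Hi.
  rewrite (count_le_strip_ones p (S i)), Nat.sub_1_r by lia. simpl Nat.pred.
  apply Bool.eq_iff_eq_true; rewrite !Nat.ltb_lt; lia.
Qed.

Lemma is_pf_pf_cond n p : In p (all_seqs n n) -> is_pf n p = pf_cond 1 n p.
Proof.
  intros Hp. apply in_all_seqs in Hp as [Hlen Hall]. unfold is_pf, pf_cond.
  rewrite Hlen, Nat.eqb_refl.
  replace (forallb (fun x => (1 <=? x) && (x <=? n)) p) with true.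
  - apply forallb_ext_in. intros i _.
    apply Bool.eq_iff_eq_true; rewrite Nat.leb_le, Nat.ltb_lt; lia.
  - symmetry. apply forallb_forall. intros x Hx. rewrite Forall_forall in Hall.
    apply Hall in Hx. apply andb_true_intro; split; apply Nat.leb_le; lia.
Qed.

Definition num_pf_cond (a m : nat) : nat :=
  length (filter (pf_cond a (a + m - 1)) (all_seqs (a + m - 1) m)).

Lemma num_pf_cond_succ a m : (1 <= a)%nat ->
  INR (num_pf_cond a (S m))
  = sum_f_R0 (fun s => INR (binom (S m) s) *
      (if 1 <? a + (S m - s) then INR (num_pf_cond (a + (S m - s) - 1) s) else 0)) (S m).
Proof.
  intros Ha. unfold num_pf_cond at 1.
  replace (a + S m - 1)%nat with (S (a + m - 1)) by lia.
  rewrite (count_partition (fun p => length (strip_ones p)) _ _ (S m)).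
  2:{ intros p Hp. apply in_all_seqs in Hp as [Hlen _].
      pose proof (Z_add_length_strip_ones p); lia. }
  apply sum_eq. intros s Hs.
  set (Q := fun q => if 1 <? a + (S m - s) then pf_cond (a + (S m - s) - 1) (a + m - 1) q
                     else false).
  rewrite (filter_ext_in _ (fun p => (length (strip_ones p) =? s) && Q (strip_ones p))).
  2:{ intros p Hp. apply in_all_seqs in Hp as [Hlen Hall].
      rewrite pf_cond_succ by (eapply Forall_impl; [|exact Hall]; simpl; lia).
      destruct (Nat.eqb_spec (length (strip_ones p)) s); [|reflexivity].
      pose proof (Z_add_length_strip_ones p).
      replace (Z p) with (S m - s)%nat by lia. unfold Q.
      destruct (1 <? a + (S m - s)); reflexivity. }
  rewrite count_strip_ones, mult_INR. unfold Q, num_pf_cond.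
  destruct (Nat.ltb_spec 1 (a + (S m - s))).
  - now replace (a + (S m - s) - 1 + s - 1)%nat with (a + m - 1)%nat by lia.
  - rewrite filter_false. simpl. ring.
Qed.

Lemma num_pf_cond_eq a m : (1 <= a)%nat -> INR (num_pf_cond a m) = abel_count (INR a) m.
Proof.
  remember (a + m)%nat as n eqn:Hn. revert a m Hn.
  induction n as [n IH] using lt_wf_ind. intros a [|m] Hn Ha.
  - unfold num_pf_cond. simpl all_seqs. cbn [filter].
    replace (pf_cond a (a + 0 - 1) []) with true; [reflexivity|].
    symmetry. apply forallb_forall. intros i Hi. apply in_seq in Hi.
    apply Nat.ltb_lt. unfold count_le; simpl. lia.
  - rewrite num_pf_cond_succ by exact Ha.
    set (x := INR a + INR m).
    transitivity (sum_f_R0 (fun s => INR (binom (S m) s) * abel_term x s) (S m)).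
    + apply sum_eq. intros s Hs. f_equal.
      destruct (Nat.ltb_spec 1 (a + (S m - s))).
      * rewrite (IH (a + m)%nat) with (m := s) by lia.
        destruct s as [|k]; [reflexivity|]. unfold abel_count, abel_term.
        replace (INR (a + (S m - S k) - 1) + INR (S k)) with x
          by (unfold x; rewrite <- !plus_INR; f_equal; lia).
        replace (INR (a + (S m - S k) - 1)) with (x - INR (S k))
          by (unfold x; rewrite <- !plus_INR, <- minus_INR by lia; f_equal; lia).
        reflexivity.
      * (* the dropped term (a = 1, s = m + 1) has the factor x - (m + 1) = 0 *)
        replace s with (S m) by lia. assert (a = 1%nat) as -> by lia.
        unfold abel_term, x. rewrite (S_INR m), INR_1. ring.
    + rewrite sum_binom_abel_term. unfold abel_count, x.
      replace (INR a + INR m + 1) with (INR a + INR (S m)) by (rewrite S_INR; ring).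
      ring.
Qed.

Lemma length_PF n : INR (length (PF n)) = abel_count 1 n.
Proof.
  unfold PF. rewrite (filter_ext_in _ (pf_cond 1 n)) by (intros; now apply is_pf_pf_cond).
  transitivity (INR (num_pf_cond 1 n)); [|apply num_pf_cond_eq; lia].
  unfold num_pf_cond. now replace (1 + n - 1)%nat with n by lia.
Qed.

Lemma count_Z_PF n k : (1 <= k <= n)%nat ->
  INR (length (filter (fun p => Z p =? k) (PF n)))
  = INR (binom n k) * abel_count (INR k) (n - k).
Proof.
  intros Hk. destruct n as [|N]; [lia|].
  unfold PF. rewrite filter_filter.
  rewrite (filter_ext_in _ (fun p => (length (strip_ones p) =? S N - k)
                                     && pf_cond k N (strip_ones p))).
  2:{ intros p Hp. rewrite is_pf_pf_cond by exact Hp.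
      apply in_all_seqs in Hp as [Hlen Hall].
      rewrite pf_cond_succ by (eapply Forall_impl; [|exact Hall]; simpl; lia).
      pose proof (Z_add_length_strip_ones p).
      destruct (Nat.eqb_spec (Z p) k) as [<-|Hne].
      - replace (1 + Z p - 1)%nat with (Z p) by lia.
        rewrite (proj2 (Nat.ltb_lt 1 (1 + Z p))), (proj2 (Nat.eqb_eq _ _)) by lia.
        now rewrite Bool.andb_true_r.
      - rewrite Bool.andb_false_r.
        destruct (Nat.eqb_spec (length (strip_ones p)) (S N - k)); [lia | reflexivity]. }
  rewrite count_strip_ones, mult_INR, (binom_sym (S N) (S N - k) k) by lia.
  f_equal. rewrite <- num_pf_cond_eq by lia. unfold num_pf_cond.
  now replace (k + (S N - k) - 1)%nat with N by lia.
Qed.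

Fixpoint falling (x : R) (k : nat) : R :=
  match k with O => 1 | S i => falling x i * (x - INR i) end.

Lemma falling_succ_shift x k : falling x (S k) = x * falling (x - 1) k.
Proof.
  revert x; induction k as [|k IH]; intros x; cbn [falling] in *; [simpl; ring|].
  rewrite IH, S_INR. ring.
Qed.

Lemma binom_falling n k : INR (binom n k) * INR (fact k) = falling (INR n) k.
Proof.
  revert k; induction n as [|n IH]; intros [|k].
  - simpl. ring.
  - rewrite falling_succ_shift. simpl. ring.
  - rewrite binom_0_r. simpl. ring.
  - rewrite falling_succ_shift, S_INR.
    replace (INR n + 1 - 1) with (INR n) by ring.
    pose proof (IH (S k)) as IHS. simpl falling in IHS. rewrite <- IH in IHS.
    rewrite <- IH. cbn [binom]. rewrite plus_INR, Rmult_plus_distr_r, IHS.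
    rewrite fact_simpl, mult_INR, S_INR. ring.
Qed.

Lemma lim_inv_INR : is_lim_seq (fun n => / INR n) 0.
Proof.
  replace (Finite 0) with (Rbar_inv p_infty) by reflexivity.
  apply is_lim_seq_inv; [apply is_lim_seq_INR | discriminate].
Qed.

Lemma lim_falling_div_pow k : is_lim_seq (fun n => falling (INR n) k / INR n ^ k) 1.
Proof.
  induction k as [|k IH].
  - apply is_lim_seq_ext with (fun _ => 1); [intros n; simpl; field | apply is_lim_seq_const].
  - apply is_lim_seq_ext_loc with (fun n => falling (INR n) k / INR n ^ k * (1 - INR k * / INR n)).
    + exists 1%nat. intros n Hn. assert (0 < INR n) by (apply lt_0_INR; lia).
      simpl. field. split; [apply pow_nonzero|]; lra.
    + replace (Finite 1) with (Finite (1 * (1 - INR k * 0))) by (f_equal; ring).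
      apply is_lim_seq_mult'; [exact IH|].
      apply is_lim_seq_minus'; [apply is_lim_seq_const|].
      exact (is_lim_seq_scal_l _ (INR k) 0 lim_inv_INR).
Qed.

Lemma exp_mult_INR y n : exp (INR n * y) = exp y ^ n.
Proof.
  induction n as [|n IH]; [simpl; now rewrite Rmult_0_l, exp_0|].
  rewrite S_INR, Rmult_plus_distr_r, Rmult_1_l, exp_plus, IH. simpl. ring.
Qed.

Lemma pow_one_plus_inv_le_exp_1 n : (1 <= n)%nat -> (1 + / INR n) ^ n <= exp 1.
Proof.
  intros Hn. assert (0 < INR n) by (apply lt_0_INR; lia).
  replace (exp 1) with (exp (INR n * / INR n)) by (f_equal; field; lra).
  rewrite exp_mult_INR. apply pow_incr. split.
  - assert (0 < / INR n) by (apply Rinv_0_lt_compat; lra). lra.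
  - apply exp_ineq1_le.
Qed.

Lemma exp_1_le_pow_one_plus_inv n : (1 <= n)%nat -> exp 1 <= (1 + / INR n) ^ S n.
Proof.
  intros Hn. assert (0 < INR n) by (apply lt_0_INR; lia).
  assert (HS : INR (S n) = INR n + 1) by apply S_INR.
  replace (exp 1) with (exp (INR (S n) * / INR (S n))) by (f_equal; field; lra).
  rewrite exp_mult_INR. apply pow_incr. split; [left; apply exp_pos|].
  (* exp (1/(n+1)) = 1 / exp (-1/(n+1)) <= 1 / (1 - 1/(n+1)) = 1 + 1/n *)
  rewrite <- (Rinv_inv (exp _)), <- exp_Ropp.
  replace (1 + / INR n) with (/ (1 + - / INR (S n))) by (rewrite HS; field; lra).
  apply Rinv_le_contravar; [|apply exp_ineq1_le].
  rewrite HS. assert (/ (INR n + 1) < 1) by (rewrite <- Rinv_1; apply Rinv_lt_contravar; lra).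
  lra.
Qed.

Lemma lim_ratio_pow : is_lim_seq (fun n => (INR n / (INR n + 1)) ^ (n - 1)) (/ exp 1).
Proof.
  apply is_lim_seq_incr_1.
  apply is_lim_seq_le_le with (fun _ => / exp 1) (fun m => (1 + / INR (S m)) ^ 2 / exp 1).
  - intros m. replace (S m - 1)%nat with m by lia.
    assert (0 < INR (S m)) by (apply lt_0_INR; lia).
    set (a := 1 + / INR (S m)).
    assert (Ha : 1 <= a) by (unfold a; assert (0 < / INR (S m)) by (apply Rinv_0_lt_compat; lra); lra).
    replace (INR (S m) / (INR (S m) + 1)) with (/ a) by (unfold a; field; lra).
    rewrite pow_inv.
    assert (0 < a ^ m) by (apply pow_lt; lra).
    pose proof (exp_pos 1).
    pose proof (pow_one_plus_inv_le_exp_1 (S m) ltac:(lia)) as Hup.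
    pose proof (exp_1_le_pow_one_plus_inv (S m) ltac:(lia)) as Hlow. fold a in Hup, Hlow.
    assert (a ^ m <= a ^ S m) by (apply Rle_pow; lia || lra).
    split.
    + apply Rinv_le_contravar; lra.
    + apply (Rmult_le_reg_r (exp 1 * a ^ m)); [nra|].
      replace (/ a ^ m * (exp 1 * a ^ m)) with (exp 1) by (field; lra).
      replace (a ^ 2 / exp 1 * (exp 1 * a ^ m)) with (a ^ S (S m)) by (simpl; field; lra).
      exact Hlow.
  - apply is_lim_seq_const.
  - replace (Finite (/ exp 1)) with (Finite ((1 + 0) ^ 2 / exp 1))
      by (f_equal; simpl; field; apply Rgt_not_eq, exp_pos).
    apply is_lim_seq_div'; [|apply is_lim_seq_const|apply Rgt_not_eq, exp_pos].
    assert (Hlim : is_lim_seq (fun m => 1 + / INR (S m)) (1 + 0)).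
    { apply is_lim_seq_plus'; [apply is_lim_seq_const|].
      apply (is_lim_seq_incr_1 (fun n => / INR n)), lim_inv_INR. }
    apply is_lim_seq_ext with (fun m => (1 + / INR (S m)) * (1 + / INR (S m))); [intros; ring|].
    replace ((1 + 0) ^ 2) with ((1 + 0) * (1 + 0)) by ring.
    apply is_lim_seq_mult'; exact Hlim.
Qed.

Lemma probZ_succ_eq n j : (S j < n)%nat ->
  probZ n (S j) = / INR (fact j) * (falling (INR n) (S j) / INR n ^ S j)
                  * (INR n / (INR n + 1)) ^ (n - 1).
Proof.
  intros Hn. unfold probZ. rewrite count_Z_PF by lia. rewrite length_PF.
  rewrite <- binom_falling, fact_simpl, mult_INR.
  destruct n as [|n]; [lia|]. replace (S n - S j)%nat with (S (n - S j)) by lia.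
  unfold abel_count. rewrite <- plus_INR.
  replace (S j + S (n - S j))%nat with (S n) by lia.
  replace (S n - 1)%nat with n by lia.
  assert (0 < INR (S n)) by (apply lt_0_INR; lia).
  pose proof (INR_fact_neq_0 j).
  assert (INR (S j) <> 0) by (apply not_0_INR; lia).
  assert (Hsplit : INR (S n) ^ n = INR (S n) ^ (n - S j) * INR (S n) ^ S j)
    by (rewrite <- pow_add; f_equal; lia).
  unfold Rdiv. rewrite Rpow_mult_distr, pow_inv, Hsplit.
  replace (INR (S n) + 1) with (1 + INR (S n)) by ring.
  field. repeat split; try apply pow_nonzero; lra.
Qed.

Theorem mainTheorem12 (j : nat) :
  Un_cv (fun n => probZ n (1 + j)) (/ (exp 1 * INR (fact j))).
Proof.
  apply is_lim_seq_Reals.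
  apply is_lim_seq_ext_loc with (fun n => / INR (fact j) * (falling (INR n) (S j) / INR n ^ S j)
                                          * (INR n / (INR n + 1)) ^ (n - 1)).
  - exists (S (S j)). intros n Hn. symmetry. apply probZ_succ_eq. lia.
  - replace (Finite (/ (exp 1 * INR (fact j)))) with (Finite (/ INR (fact j) * 1 * / exp 1)).
    + apply is_lim_seq_mult'; [apply is_lim_seq_mult'|].
      * apply is_lim_seq_const.
      * apply lim_falling_div_pow.
      * apply lim_ratio_pow.
    + f_equal. pose proof (INR_fact_neq_0 j). pose proof (exp_pos 1). field. split; lra.
Qed.
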